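(* Let $f$ and $g$ be transcendental entire functions. If $z_0\in BU(f\circ g)$, then $g(z_0)\in BU(g\circ f)$.
   Context: For an entire function $F$, $F^n$ denotes the $n$-th iterate. The escaping set is $I(F)=\{z: F^n(z)\to\infty\}$, $K(F)=\{z: \exists R>0,\ |F^n(z)|\le R\ \forall n\ge0\}$, and the Bungee set is $BU(F)=\mathbb{C}\setminus(I(F)\cup K(F))$. *)

From Stdlib Require Import Reals.
From Coquelicot Require Import Coquelicot.
Open Scope R_scope.

Definition entire (f : C -> C) : Prop :=
  forall z : C, @ex_derive C_AbsRing C_NormedModule f z.

Fixpoint cpow (z : C) (k : nat) : C :=
  match k with O => RtoC 1 | S k' => Cmult z (cpow z k') end.

Fixpoint poly_eval (a : nat -> C) (n : nat) (z : C) : C :=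
  match n with
  | O => a O
  | S n' => Cplus (poly_eval a n' z) (Cmult (a n) (cpow z n))
  end.

Definition is_polynomial (f : C -> C) : Prop :=
  exists (a : nat -> C) (n : nat), forall z, f z = poly_eval a n z.

Definition transcendental_entire (f : C -> C) : Prop :=
  entire f /\ ~ is_polynomial f.

Definition iter (F : C -> C) (n : nat) (z : C) : C := Nat.iter n F z.

Definition escaping (F : C -> C) (z : C) : Prop :=
  forall M : R, exists N : nat, forall n, (N <= n)%nat -> M < Cmod (iter F n z).

Definition bounded_orbit (F : C -> C) (z : C) : Prop :=
  exists R0 : R, 0 < R0 /\ forall n : nat, Cmod (iter F n z) <= R0.

Definition bungee (F : C -> C) (z : C) : Prop :=
  ~ escaping F z /\ ~ bounded_orbit F z.

From Stdlib Require Import Reals Lra Lia ClassicalEpsilon Classical.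
From Coquelicot Require Import Coquelicot.
Open Scope R_scope.

(* The Bungee set is transported by the semiconjugacy  g o (f o g) = (g o f) o g,
   i.e. (g o f)^n (g z0) = g ((f o g)^n z0).  Only one analytic fact about entire
   functions is needed: being continuous, they are bounded on every closed disc.
   - If the (g o f)-orbit of g z0 escaped, then so would the (f o g)-orbit of z0,
     because g is bounded on discs: a point of modulus <= M has image of
     modulus <= B_M.
   - If the (g o f)-orbit of g z0 were bounded by R0, then so would be the
     (f o g)-orbit of z0, because (f o g)^(n+1) z0 = f ((g o f)^n (g z0)) and
     f is bounded on the disc of radius R0. *)

Definition continuous_C (h : C -> C) : Prop :=
  forall z, @continuous (AbsRing_UniformSpace C_AbsRing) C_NormedModule h z.

Definition bounded_on_discs (h : C -> C) : Prop :=
  forall R0 : R, exists B : R, forall w : C, Cmod w <= R0 -> Cmod (h w) <= B.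

Lemma Cmod_lt_of_coords (u : C) (e : R) :
  Rabs (fst u) < e -> Rabs (snd u) < e -> Cmod u < 2 * e.
Proof.
  intros Hre Him.
  assert (Hsqrt2 : 0 <= sqrt 2 <= 2).
  { split; [apply sqrt_pos|]. pose proof (sqrt_pos 2). pose proof (pow2_sqrt 2). nra. }
  assert (Hmax : Rmax (Rabs (fst u)) (Rabs (snd u)) < e) by (apply Rmax_lub_lt; assumption).
  pose proof (Rabs_pos (fst u)). pose proof (Rmax_l (Rabs (fst u)) (Rabs (snd u))).
  eapply Rle_lt_trans; [apply Cmod_2Rmax|]. nra.
Qed.

Lemma Cmod_le_add_dist (u v : C) : Cmod u <= Cmod v + Cmod (u - v).
Proof.
  replace u with (v + (u - v))%C at 1
    by (destruct u, v; unfold Cplus, Cminus, Copp; simpl; f_equal; ring).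
  apply Cmod_triangle.
Qed.

Lemma Cmod_sub_sym (u v : C) : Cmod (u - v) = Cmod (v - u).
Proof.
  rewrite <- Cmod_opp. f_equal.
  destruct u, v; unfold Cminus, Copp, Cplus; simpl; f_equal; ring.
Qed.

Section BoundedOnDiscs.

Variable h : C -> C.
Hypothesis h_cont : continuous_C h.

Lemma local_oscillation (t : C) :
  exists d : posreal, forall y : C,
    Rabs (fst y - fst t) < d -> Rabs (snd y - snd t) < d -> Cmod (h y - h t) < 2.
Proof.
  pose proof (h_cont t) as Hc.
  apply filterlim_locally with (eps := mkposreal 1 Rlt_0_1) in Hc.
  destruct Hc as [d Hd]. exists (pos_div_2 d). intros y Hre Him.
  destruct (Hd y) as [Bre Bim].
  - change (Cmod (y - t)%C < d).
    replace (pos d) with (2 * (d / 2)) by field.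
    apply Cmod_lt_of_coords; assumption.
  - replace 2 with (2 * 1) by ring.
    apply Cmod_lt_of_coords; [exact Bre | exact Bim].
Qed.

(* By compactness of the square [-R',R']^2 the box size can be chosen uniformly:
   coordinate-close points x (in the square) and x' satisfy |h x'| <= |h x| + 4. *)
Lemma uniform_oscillation (R' : R) :
  exists d : posreal, forall x x' : C,
    Rabs (fst x) <= R' -> Rabs (snd x) <= R' ->
    Rabs (fst x' - fst x) < d -> Rabs (snd x' - snd x) < d ->
    Cmod (h x') <= Cmod (h x) + 4.
Proof.
  assert (choice : forall t : Compactness.Tn 2 R, {d : posreal | forall y : C,
      Rabs (fst y - fst t) < d -> Rabs (snd y - fst (snd t)) < d ->
      Cmod (h y - h (fst t, fst (snd t))) < 2}).
  { intro t. apply constructive_indefinite_description.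
    exact (local_oscillation (fst t, fst (snd t))). }
  set (delta := fun t => pos_div_2 (proj1_sig (choice t))).
  destruct (compactness_value 2 (-R', (-R', tt)) (R', (R', tt)) delta) as [d Hd].
  exists d. intros x x' Hx1 Hx2 D1 D2.
  apply NNPP. intro Hfalse.
  apply (Hd (fst x, (snd x, tt))).
  { apply Rabs_le_between in Hx1, Hx2. simpl. tauto. }
  intros [[t1 [t2 []]] [_ [[C1 [C2 _]] Hdle]]].
  apply Hfalse. unfold delta in *. simpl in *.
  destruct (choice (t1, (t2, tt))) as [e He]. simpl in *.
  pose proof (cond_pos e).
  assert (near_x : Cmod (h x - h (t1, t2)) < 2) by (apply He; lra).
  assert (near_x' : Cmod (h x' - h (t1, t2)) < 2).
  { apply He.
    - replace (fst x' - t1) with ((fst x' - fst x) + (fst x - t1)) by ring.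
      eapply Rle_lt_trans; [apply Rabs_triang|lra].
    - replace (snd x' - t2) with ((snd x' - snd x) + (snd x - t2)) by ring.
      eapply Rle_lt_trans; [apply Rabs_triang|lra]. }
  pose proof (Cmod_le_add_dist (h x') (h (t1, t2))).
  pose proof (Cmod_le_add_dist (h (t1, t2)) (h x)).
  rewrite Cmod_sub_sym in near_x. lra.
Qed.

Definition scaleC (c : R) (w : C) : C := (c * fst w, c * snd w).

(* Chaining the oscillation bound along 0 = w_0, w_1, ..., w_N = w with
   w_k = (k/N) w shows that h is bounded on every disc. *)
Lemma continuous_bounded_on_discs : bounded_on_discs h.
Proof.
  intro R0. set (R' := Rabs R0).
  destruct (uniform_oscillation R') as [d Hd]. pose proof (cond_pos d).
  destruct (nfloor_ex (R' / d)) as [n Hn].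
  { apply Rdiv_le_0_compat; [apply Rabs_pos|lra]. }
  set (N := S n).
  assert (HNpos : 0 < INR N) by (apply lt_0_INR; lia).
  assert (HN : R' < d * INR N).
  { unfold N. rewrite S_INR.
    apply Rmult_lt_reg_r with (/ d); [apply Rinv_0_lt_compat; lra|].
    replace (d * (INR n + 1) * / d) with (INR n + 1) by (field; lra).
    unfold Rdiv in Hn. lra. }
  exists (Cmod (h (0, 0)) + 4 * INR N). intros w Hw.
  set (c := fun k : nat => INR k / INR N).
  assert (in_square : forall a, Rabs a <= Cmod w -> forall k, (k <= N)%nat ->
      Rabs (c k * a) <= R').
  { intros a Ha k Hk. unfold c, R'. rewrite Rabs_mult, Rabs_pos_eq.
    2: apply Rdiv_le_0_compat; [apply pos_INR|lra].
    apply le_INR in Hk. pose proof (Rabs_pos a). pose proof (Rle_abs R0).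
    assert (INR k / INR N <= 1).
    { apply Rmult_le_reg_r with (INR N); [lra|].
      replace (INR k / INR N * INR N) with (INR k) by (field; lra). lra. }
    assert (0 <= INR k / INR N) by (apply Rdiv_le_0_compat; [apply pos_INR|lra]).
    nra. }
  assert (small_step : forall a, Rabs a <= Cmod w -> forall k,
      Rabs (c (S k) * a - c k * a) < d).
  { intros a Ha k. unfold c. rewrite S_INR.
    replace ((INR k + 1) / INR N * a - INR k / INR N * a) with (a / INR N)
      by (field; lra).
    unfold Rdiv. rewrite Rabs_mult, Rabs_inv, (Rabs_pos_eq (INR N)) by lra.
    apply Rmult_lt_reg_r with (INR N); [lra|].
    replace (Rabs a * / INR N * INR N) with (Rabs a) by (field; lra).
    pose proof (Rle_abs R0). unfold R' in HN. lra. }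
  pose proof (Rmax_Cmod w) as Hmax.
  assert (Hre : Rabs (fst w) <= Cmod w)
    by (pose proof (Rmax_l (Rabs (fst w)) (Rabs (snd w))); lra).
  assert (Him : Rabs (snd w) <= Cmod w)
    by (pose proof (Rmax_r (Rabs (fst w)) (Rabs (snd w))); lra).
  assert (chain : forall k, (k <= N)%nat ->
      Cmod (h (scaleC (c k) w)) <= Cmod (h (0, 0)) + 4 * INR k).
  { induction k as [|k IH]; intros Hk.
    - unfold scaleC, c. rewrite INR_0.
      replace (0 / INR N * fst w) with 0 by (field; lra).
      replace (0 / INR N * snd w) with 0 by (field; lra). lra.
    - specialize (IH ltac:(lia)). rewrite S_INR.
      assert (Cmod (h (scaleC (c (S k)) w)) <= Cmod (h (scaleC (c k) w)) + 4).
      { apply Hd; simpl.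
        - apply in_square; [assumption | lia].
        - apply in_square; [assumption | lia].
        - apply small_step; assumption.
        - apply small_step; assumption. }
      lra. }
  specialize (chain N (le_n N)).
  replace (scaleC (c N) w) with w in chain.
  - pose proof (pos_INR N). lra.
  - unfold scaleC, c. replace (INR N / INR N) with 1 by (field; lra).
    destruct w; simpl; f_equal; ring.
Qed.

End BoundedOnDiscs.

Lemma entire_continuous (f : C -> C) : entire f -> continuous_C f.
Proof. intros Hf z. exact (@ex_derive_continuous C_AbsRing C_NormedModule f z (Hf z)). Qed.

Lemma iter_semiconj (f g : C -> C) (z0 : C) (n : nat) :
  iter (fun z => g (f z)) n (g z0) = g (iter (fun z => f (g z)) n z0).
Proof.
  induction n as [|n IH]; [reflexivity|].
  unfold iter in *. simpl. rewrite IH. reflexivity.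
Qed.

Lemma escaping_semiconj (f g : C -> C) (z0 : C) :
  bounded_on_discs g ->
  escaping (fun z => g (f z)) (g z0) -> escaping (fun z => f (g z)) z0.
Proof.
  intros Hg Hesc M.
  destruct (Hg M) as [B HB]. destruct (Hesc B) as [N HN].
  exists N. intros n Hn. specialize (HN n Hn). rewrite iter_semiconj in HN.
  destruct (Rlt_or_le M (Cmod (iter (fun z => f (g z)) n z0))) as [Hlt|Hle];
    [assumption|].
  specialize (HB _ Hle). lra.
Qed.

(* A bounded (g o f)-orbit of g z0 forces a bounded (f o g)-orbit of z0, since
   (f o g)^(n+1) z0 = f ((g o f)^n (g z0)). *)
Lemma bounded_orbit_semiconj (f g : C -> C) (z0 : C) :
  bounded_on_discs f ->
  bounded_orbit (fun z => g (f z)) (g z0) -> bounded_orbit (fun z => f (g z)) z0.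
Proof.
  intros Hf [R0 [_ Hbd]].
  destruct (Hf R0) as [B HB].
  exists (Rmax (Rmax (Cmod z0) B) 1). split.
  { eapply Rlt_le_trans; [apply Rlt_0_1|apply Rmax_r]. }
  intros [|n].
  - eapply Rle_trans; apply Rmax_l.
  - specialize (Hbd n). rewrite iter_semiconj in Hbd.
    change (Cmod (f (g (iter (fun z => f (g z)) n z0))) <= Rmax (Rmax (Cmod z0) B) 1).
    eapply Rle_trans; [apply HB; exact Hbd|].
    eapply Rle_trans; [apply Rmax_r|apply Rmax_l].
Qed.

Theorem theorem8 (f g : C -> C) :
  transcendental_entire f -> transcendental_entire g ->
  forall z0 : C, bungee (fun z => f (g z)) z0 -> bungee (fun z => g (f z)) (g z0).
Proof.
  intros [Ef _] [Eg _] z0 [Hnot_esc Hnot_bdd].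
  pose proof (continuous_bounded_on_discs f (entire_continuous f Ef)) as Bf.
  pose proof (continuous_bounded_on_discs g (entire_continuous g Eg)) as Bg.
  split.
  - intro Hesc. exact (Hnot_esc (escaping_semiconj f g z0 Bg Hesc)).
  - intro Hbdd. exact (Hnot_bdd (bounded_orbit_semiconj f g z0 Bf Hbdd)).
Qed.
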